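(* Let $\epsilon\in\mathbb{Z}_2^*$, $\lambda\in\mathcal{O}_D$ and $t\ge2$ an integer. If $r\in\mathcal{O}_D$ satisfies $j+ij=r(j+ij)\bar r+\epsilon2^t\lambda(j+ij)\bar\lambda$, or satisfies $i+j=r(i+j)\bar r+\epsilon2^t\lambda(i+j)\bar\lambda$, then $1-r\in i\mathcal{O}_D$.
   Context: $D=\left(\frac{2,5}{\mathbb{Q}_2}\right)$ is the quaternion division algebra over $\mathbb{Q}_2$ with basis $1,i,j,ij$, $i^2=2$, $j^2=5$, $ij=-ji$; $q\mapsto\bar q$ is the canonical involution and $\mathcal{O}_D$ the maximal order (equal to $\mathbb{Z}_2\oplus\mathbb{Z}_2\omega\oplus\mathbb{Z}_2i\oplus\mathbb{Z}_2i\omega$, $\omega=(1+j)/2$). *)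

From mathcomp Require Import all_boot.
Set Implicit Arguments. Unset Strict Implicit. Unset Printing Implicit Defensive.

(* The 2-adic integers Z_2 = lim Z/2^n Z, an element being the         *)
(* compatible sequence of its canonical residues x_n in [0, 2^n).      *)
(* Leibniz equality = equality of 2-adic integers (with funext).       *)
Record Z2 := MkZ2 {
  z2 : nat -> nat ;
  z2_lt : forall n, z2 n < 2 ^ n ;
  z2_compat : forall n, z2 n.+1 %% 2 ^ n = z2 n }.

Lemma expn2_gt0 n : 0 < 2 ^ n. Proof. by rewrite expn_gt0. Qed.

Lemma dvd2S n : 2 ^ n %| 2 ^ n.+1.
Proof. by rewrite dvdn_exp2l. Qed.

Lemma mod2S m n : m %% 2 ^ n.+1 %% 2 ^ n = m %% 2 ^ n.
Proof. by rewrite modn_dvdm // dvd2S. Qed.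

Definition Z2nat (m : nat) : Z2.
Proof.
refine (@MkZ2 (fun n => m %% 2 ^ n) _ _).
- by move=> n; rewrite ltn_pmod // expn2_gt0.
- by move=> n; rewrite mod2S.
Defined.

Definition Z2add (x y : Z2) : Z2.
Proof.
refine (@MkZ2 (fun n => (z2 x n + z2 y n) %% 2 ^ n) _ _).
- by move=> n; rewrite ltn_pmod // expn2_gt0.
- move=> n; rewrite mod2S -modnDm !z2_compat; done.
Defined.

Definition Z2mul (x y : Z2) : Z2.
Proof.
refine (@MkZ2 (fun n => (z2 x n * z2 y n) %% 2 ^ n) _ _).
- by move=> n; rewrite ltn_pmod // expn2_gt0.
- move=> n; rewrite mod2S -modnMm !z2_compat; done.
Defined.

Definition Z2m1 : Z2.
Proof.
refine (@MkZ2 (fun n => (2 ^ n).-1) _ _).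
- by move=> n; rewrite prednK // expn2_gt0.
- move=> n; have h := expn2_gt0 n.
  rewrite expnS mul2n -addnn -{2}(prednK h) addnS /= modnDl modn_small //.
  by rewrite prednK.
Defined.

Definition Z2opp (x : Z2) : Z2 := Z2mul Z2m1 x.
Definition Z2zero : Z2 := Z2nat 0.
Definition Z2one : Z2 := Z2nat 1.

Definition Z2unit (e : Z2) : Prop := exists e', Z2mul e e' = Z2one.

(* Z_2[omega], omega = (1+j)/2, omega^2 = omega + 1 (since j^2 = 5);   *)
(* a pair (a, b) stands for a + b omega.  Its nontrivial automorphism  *)
(* (restriction of the canonical involution of D) sends omega to      *)
(* 1 - omega.                                                          *)
Definition Zw := (Z2 * Z2)%type.
Definition Zwadd (x y : Zw) : Zw := (Z2add x.1 y.1, Z2add x.2 y.2).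
Definition Zwmul (x y : Zw) : Zw :=
  (Z2add (Z2mul x.1 y.1) (Z2mul x.2 y.2),
   Z2add (Z2add (Z2mul x.1 y.2) (Z2mul x.2 y.1)) (Z2mul x.2 y.2)).
Definition Zwbar (x : Zw) : Zw := (Z2add x.1 x.2, Z2opp x.2).
Definition Zwopp (x : Zw) : Zw := (Z2opp x.1, Z2opp x.2).
Definition Zwsc (a : Z2) : Zw := (a, Z2zero).

(* The maximal order O_D = Z_2 + Z_2 omega + Z_2 i + Z_2 i omega of    *)
(* D = (2,5 / Q_2).  A pair (alpha, beta) of Zw stands for             *)
(* alpha + i beta.  Using i^2 = 2 and alpha i = i (bar alpha) (from    *)
(* ij = -ji), the product and the canonical involution of D are:       *)
(*  (a1 + i b1)(a2 + i b2) = (a1 a2 + 2 bar(b1) b2) + i(bar(a1) b2 + b1 a2) *)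
(*  bar(a + i b) = bar(a) - i b.                                       *)
Definition OD := (Zw * Zw)%type.
Definition ODadd (x y : OD) : OD := (Zwadd x.1 y.1, Zwadd x.2 y.2).
Definition ODopp (x : OD) : OD := (Zwopp x.1, Zwopp x.2).
Definition ODsub (x y : OD) : OD := ODadd x (ODopp y).
Definition ODmul (x y : OD) : OD :=
  (Zwadd (Zwmul x.1 y.1) (Zwmul (Zwsc (Z2nat 2)) (Zwmul (Zwbar x.2) y.2)),
   Zwadd (Zwmul (Zwbar x.1) y.2) (Zwmul x.2 y.1)).
Definition ODbar (x : OD) : OD := (Zwbar x.1, Zwopp x.2).
Definition ODsc (a : Z2) : OD := (Zwsc a, Zwsc Z2zero).
Definition ODone : OD := ODsc Z2one.

(* the quaternion units: i, and j = 2 omega - 1, and ij *)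
Definition Qi : OD := (Zwsc Z2zero, Zwsc Z2one).
Definition Qj : OD := ((Z2m1, Z2nat 2), Zwsc Z2zero).
Definition Qij : OD := ODmul Qi Qj.

Definition in_iOD (x : OD) : Prop := exists s : OD, x = ODmul Qi s.

(* Reduce modulo 2.  Since 2 divides 2^t, the lambda-term vanishes in O_D/2O_D and the
   hypothesis becomes q = r q bar(r) (mod 2) for q = j + ij or q = i + j.  Running through
   the sixteen residues of r shows that this forces the Z_2[omega]-part of r to be 1 modulo 2,
   i.e. 1 - r lies in 2 Z_2[omega] + i Z_2[omega] = i O_D. *)
From Stdlib Require Import FunctionalExtensionality.
From mathcomp Require Import all_boot.

Lemma Z2_ext (x y : Z2) : (forall n, z2 x n = z2 y n) -> x = y.
Proof.
case: x y => f lf cf [g lg cg] /= efg.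
have {}efg : f = g by apply: functional_extensionality.
subst g; congr MkZ2; apply: functional_extensionality_dep => n; exact: eq_irrelevance.
Qed.

Lemma Z2addr0 x : Z2add x Z2zero = x.
Proof. by apply: Z2_ext => n /=; rewrite mod0n addn0 modn_small // z2_lt. Qed.

Lemma Z2add0r x : Z2add Z2zero x = x.
Proof. by apply: Z2_ext => n /=; rewrite mod0n add0n modn_small // z2_lt. Qed.

Lemma Z2mul0r x : Z2mul Z2zero x = Z2zero.
Proof. by apply: Z2_ext => n /=; rewrite !mod0n ?mul0n ?mod0n. Qed.

Lemma Z2mul1r x : Z2mul Z2one x = x.
Proof. by apply: Z2_ext => n /=; rewrite modnMml mul1n modn_small // z2_lt. Qed.

Lemma Z2oppr0 : Z2opp Z2zero = Z2zero.
Proof. by apply: Z2_ext => n /=; rewrite !mod0n ?muln0 ?mod0n. Qed.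

Lemma z2_mod (x : Z2) m n : m <= n -> z2 x n %% 2 ^ m = z2 x m.
Proof.
elim: n => [|n IHn]; first by rewrite leqn0 => /eqP ->; rewrite modn_small // z2_lt.
rewrite leq_eqVlt => /orP[/eqP -> | lt_mn]; first by rewrite modn_small // z2_lt.
by rewrite -(modn_dvdm _ (@dvdn_exp2l 2 m n lt_mn)) z2_compat IHn.
Qed.

Lemma Z2_dvd2 (x : Z2) : z2 x 1 = 0 -> exists y, x = Z2mul (Z2nat 2) y.
Proof.
move=> x1_0.
have x_even n : 2 %| z2 x n.+1.
  by rewrite /dvdn -{1}(expn1 2) z2_mod // x1_0.
have half_lt n : z2 x n.+1 %/ 2 < 2 ^ n.
  by rewrite ltn_divLR // mulnC -expnS z2_lt.
have half_compat n : z2 x n.+2 %/ 2 %% 2 ^ n = z2 x n.+1 %/ 2.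
  rewrite -(z2_compat x n.+1) -{2}(divnK (x_even n.+1)).
  by rewrite expnSr -muln_modl mulnK.
exists (MkZ2 half_lt half_compat); apply: Z2_ext => n /=.
by rewrite modnMml mulnC divnK // z2_mod.
Qed.

Lemma ODmul_Qi (w : Zw) (a b : Z2) :
  ODmul Qi (w, (a, b)) = ((Z2mul (Z2nat 2) a, Z2mul (Z2nat 2) b), w).
Proof.
rewrite /ODmul /Qi /Zwsc /Zwmul /Zwbar /Zwadd /Z2opp /=.
rewrite -/(Z2opp Z2zero) Z2oppr0 !Z2mul0r ?Z2addr0 ?Z2add0r ?Z2mul1r ?Z2mul0r ?Z2addr0 ?Z2add0r.
by case: w.
Qed.

(* Arithmetic of O_D / 2^n O_D on the residues in [0, 2^n).  Each operation mirrors the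
   corresponding one on O_D, so that reduction commutes with the operations by conversion. *)
Section ResiduesMod2exp.

Variable n : nat.

Definition addm (a b : nat) := (a + b) %% 2 ^ n.
Definition mulm (a b : nat) := (a * b) %% 2 ^ n.
Definition natm (a : nat) := a %% 2 ^ n.
Definition oppm (a : nat) := mulm (2 ^ n).-1 a.

Definition Zwm := (nat * nat)%type.
Definition addw (x y : Zwm) : Zwm := (addm x.1 y.1, addm x.2 y.2).
Definition mulw (x y : Zwm) : Zwm :=
  (addm (mulm x.1 y.1) (mulm x.2 y.2),
   addm (addm (mulm x.1 y.2) (mulm x.2 y.1)) (mulm x.2 y.2)).
Definition barw (x : Zwm) : Zwm := (addm x.1 x.2, oppm x.2).
Definition oppw (x : Zwm) : Zwm := (oppm x.1, oppm x.2).
Definition scw (a : nat) : Zwm := (a, natm 0).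

Definition ODm := (Zwm * Zwm)%type.
Definition addq (x y : ODm) : ODm := (addw x.1 y.1, addw x.2 y.2).
Definition subq (x y : ODm) : ODm := addq x (oppw y.1, oppw y.2).
Definition mulq (x y : ODm) : ODm :=
  (addw (mulw x.1 y.1) (mulw (scw (natm 2)) (mulw (barw x.2) y.2)),
   addw (mulw (barw x.1) y.2) (mulw x.2 y.1)).
Definition barq (x : ODm) : ODm := (barw x.1, oppw x.2).
Definition scq (a : nat) : ODm := (scw a, scw (natm 0)).
Definition oneq : ODm := scq (natm 1).
Definition iq : ODm := (scw (natm 0), scw (natm 1)).
Definition jq : ODm := (((2 ^ n).-1, natm 2), scw (natm 0)).

Definition resZw (x : Zw) : Zwm := (z2 x.1 n, z2 x.2 n).
Definition resOD (x : OD) : ODm := (resZw x.1, resZw x.2).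

Lemma resOD_add x y : resOD (ODadd x y) = addq (resOD x) (resOD y). Proof. by []. Qed.
Lemma resOD_sub x y : resOD (ODsub x y) = subq (resOD x) (resOD y). Proof. by []. Qed.
Lemma resOD_mul x y : resOD (ODmul x y) = mulq (resOD x) (resOD y). Proof. by []. Qed.
Lemma resOD_bar x : resOD (ODbar x) = barq (resOD x). Proof. by []. Qed.
Lemma resOD_sc a : resOD (ODsc a) = scq (z2 a n). Proof. by []. Qed.
Lemma resOD_one : resOD ODone = oneq. Proof. by []. Qed.
Lemma resOD_Qi : resOD Qi = iq. Proof. by []. Qed.
Lemma resOD_Qj : resOD Qj = jq. Proof. by []. Qed.
Lemma resOD_Qij : resOD Qij = mulq iq jq. Proof. by []. Qed.

End ResiduesMod2exp.

Definition resOD_morph :=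
  (resOD_add, resOD_sub, resOD_mul, resOD_bar, resOD_sc, resOD_one,
   resOD_Qi, resOD_Qj, resOD_Qij).

Lemma mulq_sc0 (x : ODm) : mulq 1 (scq 1 0) x = ((0, 0), (0, 0)).
Proof. by case: x => [[? ?] [? ?]]; vm_compute. Qed.

Lemma z2_Z2mul_exp2 (e : Z2) {t} : 0 < t -> z2 (Z2mul e (Z2nat (2 ^ t))) 1 = 0.
Proof. by case: t => // t _; rewrite /= expnS modnMr muln0. Qed.

Lemma conj_fixed_mod2 (r : ODm) :
  r.1.1 < 2 -> r.1.2 < 2 -> r.2.1 < 2 -> r.2.2 < 2 ->
  forall q, q = addq 1 (jq 1) (mulq 1 (iq 1) (jq 1)) \/ q = addq 1 (iq 1) (jq 1) ->
  q = addq 1 (mulq 1 (mulq 1 r q) (barq 1 r)) ((0, 0), (0, 0)) ->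
  (subq 1 (oneq 1) r).1 = (0, 0).
Proof.
case: r => [[a b] [c d]] /= ha hb hc hd; move: a ha b hb c hc d hd.
do 4 (case=> [|[|?]] ? //).
all: by move=> q [] ->; vm_compute.
Qed.

Lemma in_iOD_of_res2 (x : OD) : (resOD 1 x).1 = (0, 0) -> in_iOD x.
Proof.
case: x => [[a b] w] [/Z2_dvd2[a' ->] /Z2_dvd2[b' ->]].
by exists (w, (a', b')); rewrite ODmul_Qi.
Qed.

Theorem lemma5p5 (eps : Z2) (lam r : OD) (t : nat) :
  Z2unit eps -> 2 <= t ->
  (ODadd Qj Qij =
     ODadd (ODmul (ODmul r (ODadd Qj Qij)) (ODbar r))
           (ODmul (ODsc (Z2mul eps (Z2nat (2 ^ t))))
                  (ODmul (ODmul lam (ODadd Qj Qij)) (ODbar lam)))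
   \/
   ODadd Qi Qj =
     ODadd (ODmul (ODmul r (ODadd Qi Qj)) (ODbar r))
           (ODmul (ODsc (Z2mul eps (Z2nat (2 ^ t))))
                  (ODmul (ODmul lam (ODadd Qi Qj)) (ODbar lam)))) ->
  in_iOD (ODsub ODone r).
Proof.
move=> _ t_ge2 conj_eq.
have lam_term_0 := z2_Z2mul_exp2 eps (ltnW t_ge2).
case: conj_eq => /(congr1 (resOD 1)); rewrite !resOD_morph lam_term_0 mulq_sc0 => E.
all: apply: in_iOD_of_res2; rewrite resOD_sub resOD_one.
all: apply: (@conj_fixed_mod2 (resOD 1 r) (z2_lt r.1.1 1) (z2_lt r.1.2 1)
               (z2_lt r.2.1 1) (z2_lt r.2.2 1) _ _ E).
all: by [left | right].
Qed.
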